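(* Let $G$ be an abelian group. A function $\phi:G\to\mathbb{H}$ is an extreme point of $\mathcal{P}^{\mathbb{H}}_*(G)$ if and only if $\phi$ is a group homomorphism from $G$ to $\mathbb{S}$. In other words, the extreme boundary of $\mathcal{P}^{\mathbb{H}}_*(G)$ equals the quaternionic dual $G^\delta=\mathrm{Hom}(G,\mathbb{S})$.
   Context: $\mathbb{H}$ is the real quaternion algebra and $\mathbb{S}=\{q\in\mathbb{H}:|q|=1\}$ is the (nonabelian) multiplicative group of unit quaternions. For an abelian group $G$, $\phi:G\to\mathbb{H}$ is positive definite if for all $k$, $g_1,\dots,g_k\in G$, $q_1,\dots,q_k\in\mathbb{H}$, $\sum_{i,j=1}^k\overline{q_i}\,\phi(g_j-g_i)\,q_j$ is a nonnegative real number. $\mathcal{P}^{\mathbb{H}}_*(G)$ is the convex set of positive definite $\phi:G\to\mathbb{H}$ with $\phi(0)=1$. The quaternionic dual $G^\delta$ is the set of all group homomorphisms $G\to\mathbb{S}$ (quaternionic characters). *)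

From HB Require Import structures.
From mathcomp Require Import all_boot all_order all_algebra.
From mathcomp Require Import reals.
Set Implicit Arguments. Unset Strict Implicit. Unset Printing Implicit Defensive.
Import Order.TTheory GRing.Theory Num.Theory.
Local Open Scope ring_scope.

(* Real quaternions q = q0 + q1 i + q2 j + q3 k. *)
Record quat (R : realType) := Quat { q0 : R; q1 : R; q2 : R; q3 : R }.

Section Quat.
Variable R : realType.
Implicit Types p q : quat R.

Definition qzero : quat R := Quat 0 0 0 0.
Definition qone : quat R := Quat 1 0 0 0.
Definition qadd p q : quat R :=
  Quat (q0 p + q0 q) (q1 p + q1 q) (q2 p + q2 q) (q3 p + q3 q).
Definition qscale (t : R) q : quat R :=
  Quat (t * q0 q) (t * q1 q) (t * q2 q) (t * q3 q).
(* Hamilton product: i^2 = j^2 = k^2 = ijk = -1. *)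
Definition qmul p q : quat R :=
  Quat (q0 p * q0 q - q1 p * q1 q - q2 p * q2 q - q3 p * q3 q)
       (q0 p * q1 q + q1 p * q0 q + q2 p * q3 q - q3 p * q2 q)
       (q0 p * q2 q - q1 p * q3 q + q2 p * q0 q + q3 p * q1 q)
       (q0 p * q3 q + q1 p * q2 q - q2 p * q1 q + q3 p * q0 q).
Definition qconj q : quat R := Quat (q0 q) (- q1 q) (- q2 q) (- q3 q).
Definition qnorm2 q : R := q0 q ^+ 2 + q1 q ^+ 2 + q2 q ^+ 2 + q3 q ^+ 2.
Definition qnorm q : R := Num.sqrt (qnorm2 q).

Definition qnonneg_real q : Prop :=
  [/\ q1 q = 0, q2 q = 0, q3 q = 0 & 0 <= q0 q].

Definition unit_quat q : Prop := qnorm q = 1.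
End Quat.

Section PosDef.
Variables (R : realType) (G : zmodType).

Definition pos_def (phi : G -> quat R) : Prop :=
  forall (k : nat) (g : 'I_k -> G) (q : 'I_k -> quat R),
    qnonneg_real
      (\big[@qadd R/qzero R]_(i < k) \big[@qadd R/qzero R]_(j < k)
          qmul (qmul (qconj (q i)) (phi (g j - g i))) (q j)).

Definition Pstar (phi : G -> quat R) : Prop := pos_def phi /\ phi 0 = qone R.

Definition extreme_Pstar (phi : G -> quat R) : Prop :=
  Pstar phi /\
  forall (f1 f2 : G -> quat R) (t : R), Pstar f1 -> Pstar f2 ->
    0 < t < 1 ->
    (forall x, phi x = qadd (qscale t (f1 x)) (qscale (1 - t) (f2 x))) ->
    (forall x, f1 x = phi x) /\ (forall x, f2 x = phi x).

Definition quat_character (phi : G -> quat R) : Prop :=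
  (forall x, unit_quat (phi x)) /\
  (forall x y, phi (x + y) = qmul (phi x) (phi y)).
End PosDef.

From HB Require Import structures.
From mathcomp Require Import all_boot all_order all_algebra.
From mathcomp Require Import reals.
From mathcomp Require Import ring lra.
Set Implicit Arguments. Unset Strict Implicit. Unset Printing Implicit Defensive.
Import Order.TTheory GRing.Theory Num.Theory.
Local Open Scope ring_scope.

(* Characters are extreme: every element of P_*(G) takes values in the closed
   unit ball of H (a 2 x 2 minor of the form), and the unit sphere is strictly
   convex.  Conversely let phi be extreme, a in G, and b a quaternion commuting
   with all values of phi.  The positive definite functions
     psi_(+-b)(x) = (1 + |b|^2) phi(x) +- (phi(x + a) b + conj(b) phi(x - a))
   add up to (2 + 2|b|^2) phi, so extremality makes psi_b a multiple of phi.
   For b = 1 this is d'Alembert's equation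
     phi(x + a) + phi(x - a) = 2 Re phi(a) phi(x),
   whose real part gives (Re phi(x - a) - Re phi(x) Re phi(a))^2
   = (1 - Re phi(x)^2)(1 - Re phi(a)^2).  Hence, if phi(a) <> +-1, a null
   vector of the form shows that phi(x) lies in the real span of 1 and phi(a);
   all values of phi then commute with b = Im phi(a) (or with i if phi(a) is
   real), and the identity for this pure b, added to d'Alembert's equation,
   yields phi(x + a) = phi(a) phi(x).  If phi(a) = +-1, the null vector
   e_a -+ e_0 gives the same identity directly. *)

Section QuaternionAlgebra.
Variable R : realType.
Local Notation H := (quat R).
Implicit Types (p q : H) (t : R).

Definition quat_tuple q := (q0 q, q1 q, q2 q, q3 q).
Definition tuple_quat (x : R * R * R * R) := Quat x.1.1.1 x.1.1.2 x.1.2 x.2.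
Lemma quat_tupleK : cancel quat_tuple tuple_quat. Proof. by case. Qed.
HB.instance Definition _ := Equality.copy H (can_type quat_tupleK).
HB.instance Definition _ := Choice.copy H (can_type quat_tupleK).

Lemma quatP p q :
  p = q <-> [/\ q0 p = q0 q, q1 p = q1 q, q2 p = q2 q & q3 p = q3 q].
Proof. by split=> [->|]; case: p; case: q => //= ? ? ? ? ? ? ? ? [-> -> -> ->]. Qed.

Definition qopp q : H := Quat (- q0 q) (- q1 q) (- q2 q) (- q3 q).

Local Ltac quat_ext_ring := apply/quatP; split => /=; ring.

Lemma qaddA : associative (@qadd R). Proof. by move=> *; quat_ext_ring. Qed.
Lemma qaddC : commutative (@qadd R). Proof. by move=> *; quat_ext_ring. Qed.
Lemma qadd0 : left_id (qzero R) (@qadd R). Proof. by move=> *; quat_ext_ring. Qed.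
Lemma qaddN : left_inverse (qzero R) qopp (@qadd R).
Proof. by move=> *; quat_ext_ring. Qed.
HB.instance Definition _ := GRing.isZmodule.Build H qaddA qaddC qadd0 qaddN.

Lemma qmulA : associative (@qmul R). Proof. by move=> *; quat_ext_ring. Qed.
Lemma qmul1 : left_id (qone R) (@qmul R). Proof. by move=> *; quat_ext_ring. Qed.
Lemma qmulr1 : right_id (qone R) (@qmul R). Proof. by move=> *; quat_ext_ring. Qed.
Lemma qmulDl : left_distributive (@qmul R) +%R. Proof. by move=> *; quat_ext_ring. Qed.
Lemma qmulDr : right_distributive (@qmul R) +%R. Proof. by move=> *; quat_ext_ring. Qed.
Lemma qone_neq0 : qone R != 0.
Proof. by apply/eqP => /(congr1 (@q0 R)) /= /eqP; rewrite oner_eq0. Qed.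
HB.instance Definition _ :=
  GRing.Zmodule_isNzRing.Build H qmulA qmul1 qmulr1 qmulDl qmulDr qone_neq0.

Lemma qscaleA t1 t2 q : qscale t1 (qscale t2 q) = qscale (t1 * t2) q.
Proof. by quat_ext_ring. Qed.
Lemma qscale1 : left_id 1 (@qscale R). Proof. by move=> *; quat_ext_ring. Qed.
Lemma qscaleDr : right_distributive (@qscale R) +%R.
Proof. by move=> *; quat_ext_ring. Qed.
Lemma qscaleDl q : {morph (@qscale R)^~ q : s t / s + t}.
Proof. by move=> *; quat_ext_ring. Qed.
HB.instance Definition _ :=
  GRing.Zmodule_isLmodule.Build R H qscaleA qscale1 qscaleDr qscaleDl.

Lemma qscaleAl t p q : t *: (p * q) = (t *: p) * q. Proof. by quat_ext_ring. Qed.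
HB.instance Definition _ := GRing.Lmodule_isLalgebra.Build R H qscaleAl.
Lemma qscaleAr t p q : t *: (p * q) = p * (t *: q). Proof. by quat_ext_ring. Qed.
HB.instance Definition _ := GRing.Lalgebra_isAlgebra.Build R H qscaleAr.

Lemma qaddE p q : p + q = qadd p q. Proof. by []. Qed.
Lemma qoppE p : - p = qopp p. Proof. by []. Qed.
Lemma qmulE p q : p * q = qmul p q. Proof. by []. Qed.
Lemma qscaleE t p : t *: p = qscale t p. Proof. by []. Qed.
Lemma qzeroE : 0 = qzero R. Proof. by []. Qed.
Lemma qoneE : 1 = qone R. Proof. by []. Qed.

End QuaternionAlgebra.
Arguments quatP {R p q}.

Ltac quat_simpl :=
  rewrite ?qaddE ?qoppE ?qmulE ?qscaleE ?qzeroE ?qoneE;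
  cbn [q0 q1 q2 q3 qadd qopp qmul qscale qconj qzero qone].

Ltac quat_ring := apply/quatP; quat_simpl; split; ring.

Section QuaternionConjugation.
Variable R : realType.
Local Notation H := (quat R).
Implicit Types (p q : H) (t : R).

Lemma qconj_linear : linear (@qconj R).
Proof. by move=> t p q; quat_ring. Qed.
HB.instance Definition _ := GRing.isLinear.Build R H H *:%R (@qconj R) qconj_linear.

Lemma q0_linear : scalar (@q0 R).
Proof. by move=> t p q; quat_simpl. Qed.
HB.instance Definition _ := GRing.isLinear.Build R H R *%R (@q0 R) q0_linear.

Lemma qconj1 : qconj (1 : H) = 1. Proof. by quat_ring. Qed.
Lemma qconjM p q : qconj (p * q) = qconj q * qconj p. Proof. by quat_ring. Qed.

Lemma qconj_mul p : qconj p * p = (qnorm2 p)%:A.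
Proof. by rewrite /qnorm2; quat_ring. Qed.
Lemma mul_qconj p : p * qconj p = (qnorm2 p)%:A.
Proof. by rewrite /qnorm2; quat_ring. Qed.

Lemma qnorm2_ge0 p : 0 <= qnorm2 p.
Proof. by rewrite /qnorm2 !addr_ge0 ?sqr_ge0. Qed.

Lemma qnorm2_eq0 p : (qnorm2 p == 0) = (p == 0).
Proof.
apply/idP/eqP => [/eqP p0|->]; last by rewrite /qnorm2 /= expr0n /= !addr0.
have := sqr_ge0 (q0 p); have := sqr_ge0 (q1 p).
have := sqr_ge0 (q2 p); have := sqr_ge0 (q3 p).
move: p0; rewrite /qnorm2 => p0 *.
by apply/quatP; quat_simpl; split; apply/eqP; rewrite -sqrf_eq0; apply/eqP; lra.
Qed.

Lemma qnorm_eq1 p : (qnorm p = 1) <-> (qnorm2 p = 1).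
Proof.
rewrite /qnorm; split => [h|->]; last exact: sqrtr1.
by rewrite -[qnorm2 p]sqr_sqrtr ?qnorm2_ge0 // h expr1n.
Qed.

Lemma qnorm2_convex t p q :
  t * qnorm2 p + (1 - t) * qnorm2 q - qnorm2 (t *: p + (1 - t) *: q) =
  t * (1 - t) * qnorm2 (p - q).
Proof. by rewrite /qnorm2; quat_simpl; ring. Qed.

Lemma qconj_pure p : q0 p = 0 -> qconj p = - p.
Proof. by move=> p0; apply/quatP; quat_simpl; rewrite p0 oppr0. Qed.

Lemma mul_pure_comm_real p q : q0 p = 0 -> q0 q = 0 -> p * q = q * p ->
  p * q = (q0 (p * q))%:A.
Proof.
move=> p0 q0_0 /quatP[]; quat_simpl; rewrite p0 q0_0 => *.
by apply/quatP; quat_simpl; rewrite p0 q0_0; split; lra.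
Qed.

Lemma quat_rreg p : p != 0 -> GRing.rreg p.
Proof.
move=> p0 x y /(congr1 (fun z => (qnorm2 p)^-1 *: (z * qconj p))).
by rewrite -!mulrA mul_qconj !mulr_algr !scalerA mulVf ?qnorm2_eq0 // !scale1r.
Qed.
End QuaternionConjugation.

Section PositiveDefinite.
Variables (R : realType) (G : zmodType).
Local Notation H := (quat R).
Implicit Types (f : G -> H) (s : seq (G * H)) (t : R) (q : H).

(* [s] encodes the finitely supported vector sum_i q_i e_(g_i) as the list of
   pairs (g_i, q_i). *)
Definition qform f s : H :=
  \sum_(p <- s) \sum_(p' <- s) qconj p.2 * f (p'.1 - p.1) * p'.2.

Lemma pos_defP f : pos_def f <-> forall s, qnonneg_real (qform f s).
Proof.
split=> [pd s|pd k g q].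
  have := pd (size s) (fun i => (nth (0, 0) s i).1) (fun i => (nth (0, 0) s i).2).
  rewrite /qform (big_nth (0, 0)) big_mkord.
  by congr qnonneg_real; apply: eq_bigr => i _; rewrite (big_nth (0, 0)) big_mkord.
have := pd [seq (g i, q i) | i <- index_enum 'I_k].
by rewrite /qform big_map; congr qnonneg_real; apply: eq_bigr => i _; rewrite big_map.
Qed.

Lemma qform2 f x1 r1 x2 r2 : qform f [:: (x1, r1); (x2, r2)] =
  qconj r1 * f 0 * r1 + qconj r1 * f (x2 - x1) * r2
  + qconj r2 * f (x1 - x2) * r1 + qconj r2 * f 0 * r2.
Proof. by rewrite /qform !big_cons !big_nil /= !subrr !addr0 !addrA. Qed.

Lemma qform_rcons f s g v : qform f (rcons s (g, v)) =
  qform f s + (\sum_(p <- s) qconj p.2 * f (g - p.1)) * v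
  + qconj v * (\sum_(p <- s) f (p.1 - g) * p.2) + qconj v * f 0 * v.
Proof.
rewrite /qform -cats1 big_cat big_seq1.
under eq_bigr do rewrite big_cat big_seq1.
rewrite big_cat big_seq1 big_split mulr_suml mulr_sumr /= subrr !addrA.
by congr (_ + _ + _); apply: eq_bigr => p _; rewrite mulrA.
Qed.

Lemma q0_qform_alg f (s : seq (G * R)) :
  q0 (qform f [seq (p.1, p.2%:A) | p <- s]) =
  \sum_(p <- s) \sum_(p' <- s) p.2 * p'.2 * q0 (f (p'.1 - p.1)).
Proof.
rewrite /qform big_map raddf_sum; apply: eq_bigr => p _.
rewrite big_map raddf_sum; apply: eq_bigr => p' _.
by rewrite /=; ring.
Qed.

Lemma qnonneg_real_alg t : 0 <= t -> qnonneg_real (t%:A : H).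
Proof. by move=> t0; split; rewrite /= ?mulr1 ?mulr0. Qed.

Lemma qnonneg_realZ t q : 0 <= t -> qnonneg_real q -> qnonneg_real (t *: q).
Proof.
by move=> t0 [q1q q2q q3q q0q]; split; rewrite /= ?q1q ?q2q ?q3q ?mulr0 ?mulr_ge0.
Qed.

Lemma qnonneg_realE q : qnonneg_real q -> q = (q0 q)%:A.
Proof.
by move=> [q1q q2q q3q _]; apply/quatP; quat_simpl; rewrite q1q q2q q3q; split; ring.
Qed.

Lemma pos_def0_nonneg f : pos_def f -> qnonneg_real (f 0).
Proof.
move/pos_defP/(_ [:: (0, 1)]).
by rewrite /qform !big_cons !big_nil /= subrr !addr0 qconj1 mul1r mulr1.
Qed.

Lemma pos_defN f x : pos_def f -> f (- x) = qconj (f x).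
Proof.
move=> pd; have [f01 f02 f03 _] := pos_def0_nonneg pd.
have form r := (pos_defP f).1 pd [:: (0, 1); (x, r)].
move: (form 1) (form (Quat 0 1 0 0)); rewrite !qform2 !subr0 !sub0r.
move=> -[+ + + _] [+ _ _ _]; quat_simpl; rewrite f01 f02 f03.
rewrite !(mulr0, mul0r, mulr1, mul1r, oppr0, subr0, addr0, add0r, sub0r) => *.
by apply/quatP; quat_simpl; split; lra.
Qed.

Lemma pos_def_norm2_le f x : pos_def f ->
  2 * qnorm2 (f x) <= q0 (f 0) * (1 + qnorm2 (f x)).
Proof.
move=> pd; have [f01 f02 f03 _] := pos_def0_nonneg pd.
have [_ _ _] := (pos_defP f).1 pd [:: (0, 1); (x, - qconj (f x))].
rewrite qform2 subr0 sub0r (pos_defN _ pd); quat_simpl.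
by rewrite f01 f02 f03 /qnorm2 => ?; lra.
Qed.

Lemma pos_def_eq0 f x : pos_def f -> f 0 = 0 -> f x = 0.
Proof.
move=> pd f0; have := pos_def_norm2_le x pd; rewrite f0 mul0r => le0.
by apply/eqP; rewrite -qnorm2_eq0 eq_le qnorm2_ge0 andbT; lra.
Qed.

Lemma Pstar_norm2_le1 f x : Pstar f -> qnorm2 (f x) <= 1.
Proof. by move=> [pd f0]; have := pos_def_norm2_le x pd; rewrite f0 /=; lra. Qed.

Lemma Pstar_qform_kernel f s g : Pstar f -> q0 (qform f s) = 0 ->
  \sum_(p <- s) f (p.1 - g) * p.2 = 0.
Proof.
move=> [pd f0] form0; set S := \sum_(p <- s) _.
have conjS : \sum_(p <- s) qconj p.2 * f (g - p.1) = qconj S.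
  rewrite /S raddf_sum; apply: eq_bigr => p _.
  by rewrite /= -[g - p.1]opprB (pos_defN _ pd) qconjM.
have [_ _ _] := (pos_defP f).1 pd (rcons s (g, - S)).
rewrite qform_rcons conjS -/S f0 -qoneE mulr1 raddfN !mulrN !mulNr opprK qconj_mul.
quat_simpl; rewrite form0 => ?.
by apply/eqP; rewrite -qnorm2_eq0 eq_le qnorm2_ge0 andbT; lra.
Qed.

(* The form of [pair_shift f a al be] at [s] is the form of [f] at the product
   of [s] with al e_0 + be e_a. *)
Definition pair_shift f a al be : G -> H := fun x =>
  qconj al * f x * al + qconj al * f (x + a) * be
  + qconj be * f (x - a) * al + qconj be * f x * be.

Lemma pos_def_pair_shift f a al be : pos_def f -> pos_def (pair_shift f a al be).
Proof.
move=> /pos_defP pd; apply/pos_defP => s.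
suff -> : qform (pair_shift f a al be) s =
  qform f ([seq (p.1, al * p.2) | p <- s] ++ [seq (p.1 + a, be * p.2) | p <- s]) by [].
rewrite /qform big_cat /= !big_map.
under [in RHS]eq_bigr do rewrite big_cat /= !big_map.
rewrite [in RHS]addrC.
under [in RHS]eq_bigr do rewrite big_cat /= !big_map.
rewrite [in RHS]addrC -!big_split /=; apply: eq_bigr => p _.
rewrite -!big_split /=; apply: eq_bigr => p' _.
have -> : p'.1 + a - p.1 = p'.1 - p.1 + a by rewrite addrAC.
have -> : p'.1 - (p.1 + a) = p'.1 - p.1 - a by rewrite opprD addrA.
have -> : p'.1 + a - (p.1 + a) = p'.1 - p.1 by rewrite opprD addrACA subrr addr0.
by rewrite /pair_shift !qconjM !mulrDr !mulrDl !mulrA -!addrA; congr (_ + _).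
Qed.

Lemma pos_defZ f t : 0 <= t -> pos_def f -> pos_def (fun x => t *: f x).
Proof.
move=> t0 /pos_defP pd; apply/pos_defP => s.
suff -> : qform (fun x => t *: f x) s = t *: qform f s by exact: qnonneg_realZ.
rewrite /qform scaler_sumr; apply: eq_bigr => p _; rewrite scaler_sumr.
by apply: eq_bigr => p' _; rewrite -scalerAr -scalerAl.
Qed.
End PositiveDefinite.

Section ExtremePoints.
Variables (R : realType) (G : zmodType) (phi : G -> quat R).
Hypothesis phi_ext : extreme_Pstar phi.
Local Notation H := (quat R).
Implicit Types (psi : G -> H) (a x y : G) (b : H).

Lemma extreme_decomposition psi1 psi2 M : pos_def psi1 -> pos_def psi2 -> 0 < M ->
  (forall x, psi1 x + psi2 x = M *: phi x) -> forall x, psi1 x = q0 (psi1 0) *: phi x.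
Proof.
move=> pd1 pd2 M_gt0 psiD; have [[_ phi0] ext] := phi_ext.
have [nn1 nn2] := (pos_def0_nonneg pd1, pos_def0_nonneg pd2).
have [[_ _ _ l1_ge0] [_ _ _ l2_ge0]] := (nn1, nn2).
have [psi10 psi20] := (qnonneg_realE nn1, qnonneg_realE nn2).
set l1 := q0 (psi1 0) in psi10 l1_ge0 *; set l2 := q0 (psi2 0) in psi20 l2_ge0.
have l12 : l1 + l2 = M.
  by have := congr1 (@q0 R) (psiD 0); rewrite psi10 psi20 phi0; quat_simpl; lra.
have [l10|l1_neq0] := eqVneq l1 0.
  by move=> x; rewrite l10 scale0r; apply: pos_def_eq0 pd1 _; rewrite psi10 l10 scale0r.
have [l20|l2_neq0] := eqVneq l2 0.
  move=> x; rewrite -[psi1 x]addr0 -(pos_def_eq0 x pd2) ?psiD -?l12 ?l20 ?addr0 //.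
  by rewrite psi20 l20 scale0r.
have l1_gt0 : 0 < l1 by rewrite lt_def l1_neq0.
have l2_gt0 : 0 < l2 by rewrite lt_def l2_neq0.
have P1 : Pstar (fun x => l1^-1 *: psi1 x).
  split; first by apply: pos_defZ; rewrite // invr_ge0.
  by rewrite psi10 scalerA mulVf // scale1r.
have P2 : Pstar (fun x => l2^-1 *: psi2 x).
  split; first by apply: pos_defZ; rewrite // invr_ge0.
  by rewrite psi20 scalerA mulVf // scale1r.
have t01 : 0 < l1 / M < 1.
  by rewrite divr_gt0 //= ltr_pdivrMr // mul1r -l12 ltrDl.
case: (ext _ _ (l1 / M) P1 P2 t01) => [x|phi_psi1 _].
  rewrite -qaddE -!qscaleE !scalerA.
  have -> : l1 / M * l1^-1 = M^-1 by field; rewrite l1_neq0 gt_eqF.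
  have -> : (1 - l1 / M) * l2^-1 = M^-1.
    by rewrite -l12; field; rewrite l2_neq0 l12 gt_eqF.
  by rewrite -scalerDr psiD scalerA mulVf ?gt_eqF // scale1r.
by move=> x; rewrite -phi_psi1 scalerA divff // scale1r.
Qed.

Lemma extreme_commuting_shift b a x : (forall y, phi y * b = b * phi y) ->
  phi (x + a) * b + qconj b * phi (x - a) = (2 * q0 (phi a * b)) *: phi x.
Proof.
move=> comm_b; have [[pd phi0] _] := phi_ext.
have conj_comm y : qconj b * phi y * b = qnorm2 b *: phi y.
  by rewrite -mulrA comm_b mulrA qconj_mul mulr_algl.
have shiftD y : pair_shift phi a 1 b y + pair_shift phi a 1 (- b) y =
                (2 + 2 * qnorm2 b) *: phi y.
  rewrite /pair_shift raddfN qconj1 !mul1r !mulr1 !mulrN !mulNr opprK conj_comm.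
  by move: (phi (y + a) * b) (qconj b * phi (y - a)) => u v; quat_ring.
have M_gt0 : 0 < 2 + 2 * qnorm2 b by have := qnorm2_ge0 b; lra.
have := extreme_decomposition (pos_def_pair_shift a 1 b pd)
  (pos_def_pair_shift a 1 (- b) pd) M_gt0 shiftD x.
rewrite /pair_shift !conj_comm qconj1 !mul1r !mulr1 add0r sub0r (pos_defN _ pd).
rewrite -qconjM phi0 -qoneE.
have -> : q0 (1 + phi a * b + qconj (phi a * b) + qnorm2 b *: 1) =
          1 + 2 * q0 (phi a * b) + qnorm2 b.
  by quat_simpl; ring.
move: (phi (x + a) * b) (qconj b * phi (x - a)) (phi x) (q0 (phi a * b)).
move=> u v w r /quatP[]; quat_simpl => *.
by apply/quatP; quat_simpl; split; lra.
Qed.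

Lemma extreme_dalembert a x : phi (x + a) + phi (x - a) = (2 * q0 (phi a)) *: phi x.
Proof.
have := @extreme_commuting_shift 1 a x (fun y => etrans (mulr1 _) (esym (mul1r _))).
by rewrite qconj1 !mulr1 mul1r.
Qed.

Lemma extreme_re_dalembert a x :
  q0 (phi (x + a)) + q0 (phi (x - a)) = 2 * q0 (phi a) * q0 (phi x).
Proof. by rewrite -raddfD extreme_dalembert. Qed.

Lemma extreme_re_dalembert_sqr a x :
  (q0 (phi (x - a)) - q0 (phi x) * q0 (phi a)) ^+ 2 =
  (1 - q0 (phi x) ^+ 2) * (1 - q0 (phi a) ^+ 2).
Proof.
have [[_ phi0] _] := phi_ext.
have := extreme_re_dalembert x x; have := extreme_re_dalembert a a.
have := extreme_re_dalembert (x - a) (x + a); have := extreme_re_dalembert a x.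
have -> : x + a + (x - a) = x + x by rewrite addrACA subrr addr0.
have -> : x + a - (x - a) = a + a by rewrite opprB addrC addrA subrK.
by rewrite !subrr phi0 /= => *; rewrite !expr2; nra.
Qed.

Lemma extreme_span a x : q0 (phi a) ^+ 2 != 1 ->
  exists s t : R, phi x = s%:A + t *: phi a.
Proof.
move=> ca_neq1; have [[pd phi0] _] := phi_ext.
set m := q0 (phi (x - a)) - q0 (phi x) * q0 (phi a).
set Sa := 1 - q0 (phi a) ^+ 2.
have Sa_neq0 : Sa != 0 by rewrite subr_eq0 eq_sym.
set l := m / Sa.
have lm : l * m = 1 - q0 (phi x) ^+ 2.
  by apply: (mulIf Sa_neq0); rewrite -extreme_re_dalembert_sqr mulrAC divfK // expr2.
(* By [extreme_re_dalembert_sqr], [w] is a null vector of the form of [phi]. *)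
set w := [:: (x, 1); (0, l * q0 (phi a) - q0 (phi x)); (a, - l)].
have form0 : q0 (qform phi [seq (p.1, p.2%:A) | p <- w]) = 0.
  rewrite q0_qform_alg !big_cons !big_nil /= !subrr !subr0 !sub0r !addr0 -[a - x]opprB.
  rewrite !(pos_defN _ pd) phi0 /=.
  have lSa : l * Sa = m by rewrite divfK.
  move: lm lSa; rewrite /m /Sa !expr2 => *; nra.
have := Pstar_qform_kernel 0 phi_ext.1 form0.
rewrite big_map !big_cons big_nil /= !subr0 addr0 phi0 -qoneE mul1r !mulr_algr.
move=> /quatP[]; quat_simpl => *.
by exists (q0 (phi x) - l * q0 (phi a)), l; apply/quatP; quat_simpl; split; lra.
Qed.

Lemma extreme_morph_re_sqr1 a x : q0 (phi a) ^+ 2 = 1 -> phi (x + a) = phi a * phi x.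
Proof.
move=> ca1; have [[pd phi0] _] := phi_ext.
have phia : phi a = (q0 (phi a))%:A.
  have := Pstar_norm2_le1 a phi_ext.1; rewrite /qnorm2 ca1 => le1.
  have := sqr_ge0 (q1 (phi a)); have := sqr_ge0 (q2 (phi a)).
  have := sqr_ge0 (q3 (phi a)).
  by move=> *; apply/quatP; quat_simpl; split; rewrite ?mulr1 ?mulr0; nra.
set w := [:: (a, 1); (0, - q0 (phi a))].
have form0 : q0 (qform phi [seq (p.1, p.2%:A) | p <- w]) = 0.
  rewrite q0_qform_alg !big_cons !big_nil /= !subrr !subr0 !sub0r !addr0.
  by rewrite (pos_defN _ pd) phi0 /=; move: ca1; rewrite expr2 => ?; lra.
have := Pstar_qform_kernel (- x) phi_ext.1 form0.
rewrite big_map !big_cons big_nil /= !opprK add0r addr0 (addrC a x) !mulr_algr scale1r.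
by move/eqP; rewrite scaleNr addr_eq0 opprK => /eqP ->; rewrite {2}phia mulr_algl.
Qed.

Lemma extreme_morph_commuting b : q0 b = 0 -> b != 0 ->
  (forall y, phi y * b = b * phi y) -> forall a x, phi (x + a) = phi a * phi x.
Proof.
move=> b0 b_neq0 comm_b a x.
set w := phi a - (q0 (phi a))%:A.
have w0 : q0 w = 0 by rewrite /w; quat_simpl; ring.
have wb : w * b = (q0 (w * b))%:A.
  by apply: mul_pure_comm_real => //; rewrite /w mulrBl mulrBr comm_b comm_alg.
have diff : phi (x + a) - phi (x - a) = 2 *: (w * phi x).
  apply: (quat_rreg b_neq0).
  rewrite mulrBl [phi (x - a) * b]comm_b -mulNr -(qconj_pure b0).
  have qab : q0 (phi a * b) = q0 (w * b) by rewrite /w; quat_simpl; rewrite b0; ring.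
  rewrite extreme_commuting_shift // qab -scalerAl -mulrA [phi x * b]comm_b.
  by rewrite mulrA [in w * b * _]wb mulr_algl scalerA.
have := extreme_dalembert a x.
rewrite [phi a * _](_ : _ = q0 (phi a) *: phi x + w * phi x); last first.
  by rewrite /w mulrBl mulr_algl subrKC.
move: (phi x) (w * phi x) (phi (x + a)) (phi (x - a)) (q0 (phi a)) diff.
move=> v u s d c /quatP[] + + + + /quatP[]; quat_simpl => *.
by apply/quatP; quat_simpl; split; lra.
Qed.

Lemma extreme_morph a x : phi (x + a) = phi a * phi x.
Proof.
have [ca1|ca_neq1] := eqVneq (q0 (phi a) ^+ 2) 1; first exact: extreme_morph_re_sqr1.
have span y := extreme_span y ca_neq1.
set w := phi a - (q0 (phi a))%:A.
have w0 : q0 w = 0 by rewrite /w; quat_simpl; ring.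
have [/eqP|w_neq0] := eqVneq w 0; last first.
  apply: (extreme_morph_commuting w0 w_neq0) => y.
  by have [s [t ->]] := span y; rewrite /w; quat_ring.
rewrite subr_eq0 => /eqP phia.
have i_neq0 : Quat 0 1 0 0 != 0 :> quat R.
  by apply/eqP => /quatP[_ /eqP]; rewrite oner_eq0.
apply: (extreme_morph_commuting _ i_neq0) => // y.
by have [s [t ->]] := span y; rewrite phia; quat_ring.
Qed.

Lemma extreme_character : quat_character phi.
Proof.
have [[pd phi0] _] := phi_ext.
have morph x y : phi (x + y) = phi x * phi y by rewrite addrC extreme_morph.
split=> // x; apply/qnorm_eq1.
have := morph (- x) x; rewrite addNr phi0 (pos_defN _ pd) qconj_mul => /quatP[+ _ _ _].
by quat_simpl; rewrite mulr1 => ->.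
Qed.
End ExtremePoints.

Section Characters.
Variables (R : realType) (G : zmodType) (phi : G -> quat R).
Hypothesis phi_char : quat_character phi.

Let morph x y : phi (x + y) = phi x * phi y := phi_char.2 x y.

Lemma character_conj_mul x : qconj (phi x) * phi x = 1.
Proof. by rewrite qconj_mul (qnorm_eq1 _).1 ?scale1r //; apply: phi_char.1. Qed.

Lemma character0 : phi 0 = 1.
Proof.
by rewrite -[LHS]mul1r -{1}(character_conj_mul 0) -mulrA -morph addr0 character_conj_mul.
Qed.

Lemma characterN x : phi (- x) = qconj (phi x).
Proof.
by rewrite -[LHS]mul1r -(character_conj_mul x) -mulrA -morph subrr character0 mulr1.
Qed.

Lemma character_pos_def : pos_def phi.
Proof.
apply/pos_defP => s.
set S := \sum_(p <- s) phi p.1 * p.2.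
suff -> : qform phi s = qconj S * S.
  by rewrite qconj_mul; apply/qnonneg_real_alg/qnorm2_ge0.
rewrite /qform raddf_sum mulr_suml; apply: eq_bigr => p _.
rewrite mulr_sumr; apply: eq_bigr => p' _.
by rewrite /= addrC morph characterN qconjM !mulrA.
Qed.

Lemma character_extreme : extreme_Pstar phi.
Proof.
split=> [|f1 f2 t P1 P2 /andP[t_gt0 t_lt1] phiE].
  by split; [exact: character_pos_def | exact: character0].
have {}phiE x : phi x = t *: f1 x + (1 - t) *: f2 x := phiE x.
suff f12 x : f1 x = f2 x by split=> x; rewrite phiE -f12 -scalerDl subrKC scale1r.
have tt_gt0 : 0 < t * (1 - t) by rewrite mulr_gt0 ?subr_gt0.
have n12_le0 : qnorm2 (f1 x - f2 x) <= 0.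
  rewrite -(pmulr_rle0 _ tt_gt0) -qnorm2_convex -phiE ((qnorm_eq1 _).1 (phi_char.1 x)).
  by have := Pstar_norm2_le1 x P1; have := Pstar_norm2_le1 x P2; nra.
by apply/eqP; rewrite -subr_eq0 -qnorm2_eq0 eq_le qnorm2_ge0 andbT.
Qed.
End Characters.

Theorem mainTheorem11 (R : realType) (G : zmodType) (phi : G -> quat R) :
  extreme_Pstar phi <-> quat_character phi.
Proof. by split; [exact: extreme_character | exact: character_extreme]. Qed.
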